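(* Let $p_0,q\in\mathcal S^{d-1}$ and consider the preference dynamics with the fixed recommendation $q_t=q$ for all $t\ge 0$, i.e. $\tilde p_{t+1}=p_t+\eta_t\,(p_t^\top q)\,q$, $p_{t+1}=\tilde p_{t+1}/\|\tilde p_{t+1}\|_2$, with step sizes either constant ($\eta_t=\eta$) or decreasing ($\eta_t=\frac{\eta}{t+s}$). Then $p_t\to q$ as $t\to\infty$ if $p_0^\top q>0$, and $p_t\to -q$ if $p_0^\top q<0$. Furthermore, for every $t\ge0$, $p_t$ lies in the cone generated by $p_0$ and $\mathrm{sgn}(p_0^\top q)\,q$ (i.e. $p_t$ is a nonnegative linear combination of these two vectors). In particular, when $p_0^\top q\neq 0$, for all $t\ge 0$, \[(p_t^\top q)^{-2}=1+\gamma_t^2\big((p_0^\top q)^{-2}-1\big),\qquad \gamma_t=\begin{cases}(\eta+1)^{-t}, & \eta_t=\eta,\\[2pt] \prod_{k=0}^{\eta-1}\frac{s+k}{t+s+k}, & \eta_t=\frac{\eta}{t+s}.\end{cases}\]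
   Context: $\mathcal S^{d-1}$ denotes the unit sphere in $\mathbb{R}^d$. In the constant step-size setting $\eta>0$ is a constant; in the decreasing step-size setting $\eta$ and $s$ are positive integers. $\mathrm{sgn}$ denotes the sign function. *)

From HB Require Import structures.
From mathcomp Require Import all_boot all_order all_algebra.
From mathcomp Require Import all_classical all_reals all_analysis.
Set Implicit Arguments. Unset Strict Implicit. Unset Printing Implicit Defensive.
Import Order.TTheory GRing.Theory Num.Theory.
Import numFieldNormedType.Exports.
Local Open Scope ring_scope.

Definition dotv {R : realType} {d : nat} (u v : 'rV[R]_d) : R := (u *m v^T) 0 0.
Definition norm2 {R : realType} {d : nat} (u : 'rV[R]_d) : R := Num.sqrt (dotv u u).

Definition on_sphere {R : realType} {d : nat} (u : 'rV[R]_d) : Prop := norm2 u = 1.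

Inductive schedule (R : realType) : Type :=
| Constant of R
| Decreasing of nat & nat.

Definition valid_schedule {R : realType} (sc : schedule R) : Prop :=
  match sc with
  | Constant eta => 0 < eta
  | Decreasing eta s => (0 < eta)%N /\ (0 < s)%N
  end.

Definition step {R : realType} (sc : schedule R) (t : nat) : R :=
  match sc with
  | Constant eta => eta
  | Decreasing eta s => eta%:R / (t + s)%:R
  end.

Fixpoint pref {R : realType} {d : nat} (sc : schedule R) (p0 q : 'rV[R]_d) (t : nat)
  : 'rV[R]_d :=
  match t with
  | 0 => p0
  | t'.+1 =>
      let p := pref sc p0 q t' in
      let pt := p + (step sc t' * dotv p q) *: q in
      (norm2 pt)^-1 *: pt
  end.

Definition gamma {R : realType} (sc : schedule R) (t : nat) : R :=
  match sc with
  | Constant eta => (eta + 1) ^- t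
  | Decreasing eta s => \prod_(k < eta) ((s + k)%:R / (t + s + k)%:R)
  end.

(* Writing x_t = p_t^T q, one step multiplies x_t by (1 + eta_t) / ||p~_{t+1}||,
   where ||p~_{t+1}||^2 = 1 + eta_t (2 + eta_t) x_t^2.  Hence x_t keeps its sign,
   and y_t = x_t^-2 - 1 (the squared tangent of the angle between p_t and q)
   evolves linearly: y_{t+1} = y_t / (1 + eta_t)^2, so y_t = gamma_t^2 y_0 with
   gamma_t = prod_{k<t} (1 + eta_k)^-1, which tends to 0 for both schedules.
   When x_t > 0 we get ||p_t - q||^2 = 2 - 2 x_t <= 2 y_t, so p_t -> q; replacing
   q by -q leaves the dynamics unchanged, which gives the case x_0 < 0. *)
From HB Require Import structures.
From mathcomp Require Import all_boot all_order all_algebra.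
From mathcomp Require Import all_classical all_reals all_analysis.
From mathcomp Require Import ring lra.
Set Implicit Arguments. Unset Strict Implicit. Unset Printing Implicit Defensive.
Import Order.TTheory GRing.Theory Num.Theory.
Import numFieldNormedType.Exports.
Local Open Scope classical_set_scope.
Local Open Scope ring_scope.

Section InnerProduct.
Variables (R : realType) (d : nat).
Implicit Types u v w : 'rV[R]_d.

Lemma dotvE u v : dotv u v = \sum_i u 0 i * v 0 i.
Proof. by rewrite /dotv mxE; apply: eq_bigr => i _; rewrite mxE. Qed.

Lemma dotvC u v : dotv u v = dotv v u.
Proof. by rewrite !dotvE; apply: eq_bigr => i _; rewrite mulrC. Qed.

Lemma dotvDl u v w : dotv (u + v) w = dotv u w + dotv v w.
Proof. by rewrite !dotvE -big_split; apply: eq_bigr => i _; rewrite mxE mulrDl. Qed.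

Lemma dotvZl a u w : dotv (a *: u) w = a * dotv u w.
Proof. by rewrite !dotvE mulr_sumr; apply: eq_bigr => i _; rewrite mxE mulrA. Qed.

Lemma dotvNl u w : dotv (- u) w = - dotv u w.
Proof. by rewrite -scaleN1r dotvZl mulN1r. Qed.

Lemma dotvDr u v w : dotv w (u + v) = dotv w u + dotv w v.
Proof. by rewrite !(dotvC w) dotvDl. Qed.

Lemma dotvZr a u w : dotv w (a *: u) = a * dotv w u.
Proof. by rewrite !(dotvC w) dotvZl. Qed.

Lemma dotvNr u w : dotv w (- u) = - dotv w u.
Proof. by rewrite !(dotvC w) dotvNl. Qed.

Lemma sqr_entry_le_dotv u i : u 0 i ^+ 2 <= dotv u u.
Proof.
rewrite dotvE (bigD1 i) //= -expr2 lerDl.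
by apply: sumr_ge0 => j _; rewrite -expr2 sqr_ge0.
Qed.

Lemma dotv_ge0 u : 0 <= dotv u u.
Proof. by rewrite dotvE; apply: sumr_ge0 => i _; rewrite -expr2 sqr_ge0. Qed.

Lemma sqr_norm2 u : norm2 u ^+ 2 = dotv u u.
Proof. by rewrite sqr_sqrtr // dotv_ge0. Qed.

Lemma dotv_sphere u : on_sphere u -> dotv u u = 1.
Proof. by move=> u1; rewrite -sqr_norm2 u1 expr1n. Qed.

Lemma mx_norm_le_norm2 u : `|u| <= norm2 u.
Proof.
rewrite [leLHS]/Num.Def.normr /= mx_normrE.
apply: bigmax_le => [|[i j] _ /=]; first exact: sqrtr_ge0.
by rewrite (ord1 i) -sqrtr_sqr ler_wsqrtr // sqr_entry_le_dotv.
Qed.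

Lemma sqr_dotv_le1 u v : dotv u u = 1 -> dotv v v = 1 -> dotv u v ^+ 2 <= 1.
Proof.
move=> u1 v1; have := dotv_ge0 (u - dotv u v *: v).
rewrite dotvDl !dotvDr !dotvNl !dotvNr !dotvZl !dotvZr u1 v1 (dotvC v u).
by set x := dotv u v => ?; nra.
Qed.

End InnerProduct.

Section NormalizedStep.
Variables (R : realType) (d : nat) (eta : R) (p q : 'rV[R]_d).
Hypotheses (eta_ge0 : 0 <= eta) (p_unit : dotv p p = 1) (q_unit : dotv q q = 1).

Let x := dotv p q.
Let pt := p + (eta * x) *: q.

Lemma dotv_pre_step : dotv pt pt = 1 + eta * (2 + eta) * x ^+ 2.
Proof.
by rewrite /pt dotvDl !dotvDr !dotvZl !dotvZr p_unit q_unit (dotvC q p) -/x; ring.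
Qed.

Lemma norm2_pre_step_gt0 : 0 < norm2 pt.
Proof.
have : 0 <= eta * (2 + eta) * x ^+ 2.
  by rewrite mulr_ge0 ?sqr_ge0 // mulr_ge0 // addr_ge0.
by rewrite sqrtr_gt0 dotv_pre_step => ?; lra.
Qed.

Lemma dotv_step_self : dotv ((norm2 pt)^-1 *: pt) ((norm2 pt)^-1 *: pt) = 1.
Proof.
rewrite dotvZl dotvZr -sqr_norm2; field.
by rewrite gt_eqF // norm2_pre_step_gt0.
Qed.

Lemma dotv_step : dotv ((norm2 pt)^-1 *: pt) q = (norm2 pt)^-1 * ((1 + eta) * x).
Proof. by rewrite dotvZl /pt dotvDl dotvZl q_unit -/x; ring. Qed.

Lemma inv_sqr_dotv_step : x != 0 ->
  dotv ((norm2 pt)^-1 *: pt) q ^- 2 - 1 = (x ^- 2 - 1) / (1 + eta) ^+ 2.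
Proof.
move=> x0; have eta1 : 1 + eta != 0 by rewrite gt_eqF // ltr_wpDr.
have : dotv pt pt != 0 by rewrite -sqr_norm2 expf_neq0 // gt_eqF ?norm2_pre_step_gt0.
rewrite dotv_step exprMn exprVn sqr_norm2 dotv_pre_step => pt0.
by field; rewrite eta1 x0 pt0.
Qed.

End NormalizedStep.

Lemma prod_ratio_shiftS (F : numFieldType) (a b m : nat) : (0 < a)%N ->
  \prod_(k < m) ((b + k)%:R / (a.+1 + k)%:R : F)
  = \prod_(k < m) ((b + k)%:R / (a + k)%:R) * (a%:R / (a + m)%:R).
Proof.
move=> a_gt0; elim: m => [|m IH].
  by rewrite !big_ord0 addn0 divff ?mul1r // pnatr_eq0 -lt0n.
rewrite !big_ord_recr /= IH addSn -addnS.
by field; rewrite !gt_eqF ?ltr_pwDl ?addr_ge0 ?ltr0n.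
Qed.

Lemma prod_ratio_le_first (F : realFieldType) (s t m : nat) :
  0 <= \prod_(k < m.+1) ((s + k)%:R / (t + s + k)%:R : F) <= s%:R / (t + s)%:R.
Proof.
rewrite big_ord_recl /= !addn0.
have factor_ge0 (i : 'I_m) : 0 <= ((s + bump 0 i)%:R / (t + s + bump 0 i)%:R : F).
  by rewrite divr_ge0.
have rest_le1 : \prod_(i < m) ((s + bump 0 i)%:R / (t + s + bump 0 i)%:R : F) <= 1.
  apply: prodr_ile1 => i _; rewrite factor_ge0 /=.
  by rewrite ler_pdivrMr ?ltr0n ?addn_gt0 ?orbT // mul1r ler_nat -addnA leq_addl.
rewrite mulr_ge0 ?prodr_ge0 ?divr_ge0 //=.
by rewrite ler_piMr ?divr_ge0 ?prodr_ge0.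
Qed.

Section Schedule.
Variables (R : realType) (sc : schedule R).
Hypothesis sc_valid : valid_schedule sc.

Lemma step_ge0 t : 0 <= step sc t.
Proof. by move: sc_valid; case: sc => [eta /ltW | eta s _] //=; rewrite divr_ge0. Qed.

Lemma gamma0 : gamma sc 0 = 1.
Proof.
move: sc_valid; case: sc => [eta _ | eta s [_ s_gt0]] /=; first by rewrite expr0 invr1.
by rewrite big1 // => k _; rewrite add0n divff // pnatr_eq0 addn_eq0 negb_and -lt0n s_gt0.
Qed.

Lemma gammaS t : gamma sc t.+1 = gamma sc t / (1 + step sc t).
Proof.
move: sc_valid; case: sc => [eta _ | eta s [_ s_gt0]] /=.
  by rewrite exprSr invfM addrC.
have ts_gt0 : (0 < t + s)%N by rewrite addn_gt0 s_gt0 orbT.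
under eq_bigr do rewrite addSn.
rewrite prod_ratio_shiftS //.
have ts : (0 : R) < t%:R + s%:R by rewrite -natrD ltr0n.
have tse : (0 : R) < t%:R + s%:R + eta%:R by rewrite ltr_wpDr.
by field; rewrite !gt_eqF.
Qed.

Lemma gamma_cvg0 : gamma sc t @[t --> \oo] --> 0.
Proof.
move: sc_valid; case: sc => [eta /= eta_gt0 | eta s /= [eta_gt0 s_gt0]] /=.
  under eq_fun do rewrite -exprVn.
  by apply: cvg_expr; rewrite ger0_norm ?invf_lt1 ?invr_ge0; lra.
apply: (@squeeze_cvgr _ _ _ _ (fun=> 0) (fun t => s%:R * harmonic t)).
- apply: nearW => t; rewrite /harmonic /=.
  case: eta eta_gt0 => // eta _.
  have /andP[-> le_first] := prod_ratio_le_first R s t eta.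
  apply: (le_trans le_first); rewrite ler_wpM2l //.
  rewrite lef_pV2 ?posrE ?ltr0n ?addn_gt0 ?s_gt0 ?orbT //.
  by rewrite ler_nat -addn1 leq_add2l.
- exact: cvg_cst.
- by rewrite -(mulr0 s%:R); apply: cvgM; [exact: cvg_cst | exact: cvg_harmonic].
Qed.

End Schedule.

Lemma subr1_le_invsqr (F : realFieldType) (x : F) :
  0 < x -> x <= 1 -> 1 - x <= x ^- 2 - 1.
Proof.
move=> x_gt0 x_le1; have x2_gt0 : 0 < x ^+ 2 by rewrite exprn_gt0.
have -> : x ^- 2 - 1 = (1 - x ^+ 2) / x ^+ 2 by field; rewrite gt_eqF.
apply: (@le_trans _ _ (1 - x ^+ 2)); first by nra.
by rewrite ler_pdivlMr //; have := sqr_ge0 (1 - x ^+ 2); nra.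
Qed.

Section Dynamics.
Variables (R : realType) (d : nat) (sc : schedule R) (p0 q : 'rV[R]_d).
Hypotheses (sc_valid : valid_schedule sc).
Hypotheses (p0_unit : dotv p0 p0 = 1) (q_unit : dotv q q = 1).

Local Notation p := (pref sc p0 q).
Local Notation x t := (dotv (pref sc p0 q t) q).

Lemma pref_unit t : dotv (p t) (p t) = 1.
Proof. by elim: t => //= t IH; rewrite dotv_step_self ?step_ge0. Qed.

Lemma sg_dotv_pref t : Num.sg (x t) = Num.sg (x 0).
Proof.
elim: t => // t IH; rewrite /= dotv_step ?step_ge0 ?pref_unit // !sgrM IH.
rewrite gtr0_sg ?invr_gt0 ?norm2_pre_step_gt0 ?step_ge0 ?pref_unit //.
by rewrite gtr0_sg ?mul1r // ltr_wpDr ?step_ge0.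
Qed.

Lemma pref_cone t : exists a b : R, 0 <= a /\ 0 <= b /\
  p t = a *: p0 + b *: (Num.sg (x 0) *: q).
Proof.
elim: t => [|t [a [b [a_ge0 [b_ge0 pt_cone]]]]].
  by exists 1, 0; rewrite scale1r scale0r addr0.
have n_gt0 := norm2_pre_step_gt0 (step_ge0 sc_valid t) (pref_unit t) q_unit.
have xtE : x t = Num.sg (x 0) * `|x t| by rewrite -(sg_dotv_pref t) -numEsg.
move: n_gt0; rewrite /=; set n := norm2 _ => n_gt0.
have n_inv_ge0 : 0 <= n^-1 by rewrite invr_ge0 ltW.
exists (n^-1 * a), (n^-1 * (b + step sc t * `|x t|)).
split; first exact: mulr_ge0.
split; first by rewrite mulr_ge0 // addr_ge0 // mulr_ge0 ?step_ge0.
rewrite {1}pt_cone {1}xtE !scalerDr !scalerA -addrA -scalerDl.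
by congr (_ + _ *: _); ring.
Qed.

Lemma inv_sqr_dotv_pref t : x 0 != 0 ->
  x t ^- 2 - 1 = gamma sc t ^+ 2 * (x 0 ^- 2 - 1).
Proof.
move=> x0_neq0; elim: t => [|t IH]; first by rewrite gamma0 // expr1n mul1r.
have xt_neq0 : x t != 0 by rewrite -sgr_eq0 sg_dotv_pref sgr_eq0.
have step1 : 1 + step sc t != 0 by rewrite gt_eqF // ltr_wpDr ?step_ge0.
rewrite /= inv_sqr_dotv_step ?step_ge0 ?pref_unit // IH gammaS //.
by field; rewrite x0_neq0 step1.
Qed.

Lemma norm_pref_subr_le t : 0 < x 0 ->
  `|p t - q| <= Num.sqrt (2 * (x 0 ^- 2 - 1)) * `|gamma sc t|.
Proof.
move=> x0_gt0; have xt_gt0 : 0 < x t by rewrite -sgr_gt0 sg_dotv_pref sgr_gt0.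
have xt_le1 : x t <= 1 by have := sqr_dotv_le1 (pref_unit t) q_unit; nra.
have y0_ge0 : 0 <= x 0 ^- 2 - 1.
  by rewrite subr_ge0 invf_ge1 ?exprn_gt0 // sqr_dotv_le1.
apply: le_trans (mx_norm_le_norm2 _) _.
rewrite -sqrtr_sqr -sqrtrM ?mulr_ge0 // ler_wsqrtr //.
rewrite dotvDl !dotvDr !dotvNl !dotvNr pref_unit q_unit (dotvC q).
have := subr1_le_invsqr xt_gt0 xt_le1.
by rewrite (inv_sqr_dotv_pref t) ?gt_eqF // => ?; lra.
Qed.

Lemma pref_cvg : 0 < x 0 -> p t @[t --> \oo] --> q.
Proof.
move=> x0_gt0; apply/subr_cvg0; apply: norm_cvg0.
pose c := Num.sqrt (2 * (x 0 ^- 2 - 1)).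
have dist_le t : `|p t - q| <= c * `|gamma sc t| := norm_pref_subr_le t x0_gt0.
apply: (@squeeze_cvgr _ _ _ _ (fun=> 0) (fun t => c * `|gamma sc t|)).
- by apply: nearW => t; rewrite normr_ge0 dist_le.
- exact: cvg_cst.
- have -> : (0 : R) = c * `|0 : R| by rewrite normr0 mulr0.
  by apply: cvgM; [exact: cvg_cst | apply: cvg_norm; exact: gamma_cvg0].
Qed.

End Dynamics.

Lemma pref_oppr (R : realType) (d : nat) (sc : schedule R) (p0 q : 'rV[R]_d) t :
  pref sc p0 (- q) t = pref sc p0 q t.
Proof. by elim: t => //= t ->; rewrite dotvNr mulrN scaleNr scalerN opprK. Qed.

Theorem proposition1 (R : realType) (d : nat) (sc : schedule R) (p0 q : 'rV[R]_d) :
  valid_schedule sc -> on_sphere p0 -> on_sphere q ->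
  (0 < dotv p0 q -> pref sc p0 q t @[t --> \oo] --> q) /\
  (dotv p0 q < 0 -> pref sc p0 q t @[t --> \oo] --> - q) /\
  (forall t : nat, exists a b : R, 0 <= a /\ 0 <= b /\
      pref sc p0 q t = a *: p0 + b *: (Num.sg (dotv p0 q) *: q)) /\
  (dotv p0 q != 0 -> forall t : nat,
      (dotv (pref sc p0 q t) q) ^- 2
        = 1 + (gamma sc t) ^+ 2 * ((dotv p0 q) ^- 2 - 1)).
Proof.
move=> sc_valid /dotv_sphere p0_unit /dotv_sphere q_unit.
have Nq_unit : dotv (- q) (- q) = 1 by rewrite dotvNl dotvNr opprK.
split; first exact: pref_cvg.
split.
  move=> x0_lt0; under eq_fun do rewrite -pref_oppr.
  by apply: pref_cvg; rewrite //= dotvNr oppr_gt0.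
split; first exact: pref_cone.
by move=> x0_neq0 t; rewrite -inv_sqr_dotv_pref // addrC subrK.
Qed.
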